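(* Let $k\ge 2$, $r\ge k$, and let $H$ be a complete $k$-partite graph on $h$ vertices. There exists $\gamma_0>0$ such that for every $0<\gamma<\gamma_0$ there exist $\zeta>0$ and $n_0$ with the following property: for every $n\ge n_0$, if $P$ is a complete $s$-partite $K_{r+1}$-free graph on $n$ vertices with $\mathcal N(H,P)\ge \mathrm{ex}(n,H,K_{r+1})-\zeta n^h$, then $s=r$ and every part of $P$ has size at least $\gamma n$.
   Context: $\mathcal N(H,G)$ is the number of subgraphs of $G$ isomorphic to $H$; $\mathrm{ex}(n,H,K_{r+1})$ is the maximum of $\mathcal N(H,G)$ over $n$-vertex graphs $G$ containing no clique $K_{r+1}$. *)

From HB Require Import structures.
From mathcomp Require Import all_boot all_order all_algebra.
From mathcomp Require Import reals.
Set Implicit Arguments. Unset Strict Implicit. Unset Printing Implicit Defensive.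

(* A (simple) graph on the vertex set 'I_n is given by its set of ordered
   edge pairs, required to be symmetric and irreflexive. *)
Definition graph (n : nat) := {set 'I_n * 'I_n}.

Definition simple_graph n (G : graph n) : bool :=
  [forall x : 'I_n, (x, x) \notin G] &&
  [forall x : 'I_n, forall y : 'I_n, ((x, y) \in G) ==> ((y, x) \in G)].

Definition clique_free n (m : nat) (G : graph n) : bool :=
  ~~ [exists S : {set 'I_n}, (#|S| == m) &&
        [forall x in S, forall y in S, (x != y) ==> ((x, y) \in G)]].

Definition cmp_colouring n s (c : 'I_n -> 'I_s) (G : graph n) : Prop :=
  (forall i : 'I_s, exists x : 'I_n, c x = i) /\
  (forall x y : 'I_n, ((x, y) \in G) = (c x != c y)).

Definition complete_multipartite n s (G : graph n) : Prop :=
  exists c : 'I_n -> 'I_s, cmp_colouring c G.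

(* A copy of H in G: the image of an injective homomorphism f, recorded as
   (vertex set, edge set).  The number of distinct copies is N(H,G), the
   number of subgraphs of G isomorphic to H. *)
Definition copy h n (H : graph h) (f : {ffun 'I_h -> 'I_n}) :=
  (f @: [set: 'I_h], [set (f p.1, f p.2) | p in H]).

Definition embedding h n (H : graph h) (G : graph n) (f : {ffun 'I_h -> 'I_n}) : bool :=
  injectiveb f && [forall p in H, (f p.1, f p.2) \in G].

Definition NH h n (H : graph h) (G : graph n) : nat :=
  #|[set copy H f | f in [pred f | embedding H G f]]|.

Definition exHK h (H : graph h) (n r : nat) : nat :=
  \max_(G : graph n | simple_graph G && clique_free r.+1 G) NH H G.

From HB Require Import structures.
From mathcomp Require Import all_boot all_order all_algebra.
From mathcomp Require Import reals.
From mathcomp Require Import zify lra ring.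
Import Order.TTheory GRing.Theory Num.Theory.

Set Implicit Arguments.
Unset Strict Implicit.
Unset Printing Implicit Defensive.

(* Once s <= r (forced by K_{r+1}-freeness), P is the graph cmp_graph d of a
   colouring d : 'I_n -> 'I_r.  The heart of the proof is stability_deficit:
   if some part of d has fewer than n / G0 vertices, then
   NH(H, cmp_graph d) <= ex(n, H, K_{r+1}) - n^h / C for explicit C and G0.
   Call a part large if it has at least n / D vertices.
   - Fewer than k large parts: the k colour classes of H land in distinct
     parts, so every copy of H meets the few vertices of the small parts; this
     bounds NH far below the lower bound on ex given by a balanced graph.
   - At least k large parts: move a block of about n / D vertices of a large
     part into the tiny part.  This creates a box of new copies of H and only
     destroys copies using an edge between the block and the tiny part, which
     are few because that part is tiny; the new graph still has at most ex
     copies, so the original graph was far from extremal. *)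

Lemma card_bigcup_le (I T : finType) (P : pred I) (F : I -> {set T}) :
  #|\bigcup_(i | P i) F i| <= \sum_(i | P i) #|F i|.
Proof.
elim/big_ind2: _ => [|m A l B leA leB|i _]; first by rewrite cards0.
  by apply: leq_trans (leq_card_setU A B) (leq_add leA leB).
by [].
Qed.

Lemma le_double_div n d : 0 < d -> d <= n -> n <= 2 * d * (n %/ d).
Proof.
move=> d_gt0 le_dn; have q_gt0 : 0 < n %/ d by rewrite divn_gt0.
have := divn_eq n d; have := ltn_pmod n d_gt0; nia.
Qed.

Lemma leq_div_of_mul n D c : n <= D * c -> n %/ D <= c.
Proof.
case: D => [|D] le_n; first by rewrite divn0.
by apply: leq_trans (leq_div2r _ le_n) _; rewrite mulKn.
Qed.

(* A deficit inequality a N + X <= a E survives scaling a by any m >= 1,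
   given N <= E; used to bring the two cases to a common constant. *)
Lemma deficit_scale a m N X E : a * N + X <= a * E -> N <= E -> 0 < m ->
  a * m * N + X <= a * m * E.
Proof.
case: m => // m le_aNX le_NE _; have := leq_mul (leqnn (a * m)) le_NE.
rewrite mulnS !mulnDl; lia.
Qed.

Section Blocks.
Variables (T : finType) (x0 : T).

Definition separated I (B : I -> {set T}) :=
  forall j j' x, x \in B j -> x \in B j' -> j = j'.

(* A set with at least m t elements contains m separated blocks of size t
   (consecutive segments of its enumeration). *)
Lemma blocks (X : {set T}) m t : m * t <= #|X| ->
  exists B : 'I_m -> {set T},
    [/\ forall j, B j \subset X, forall j, #|B j| = t & separated B].
Proof.
move=> le_mt.
pose pos (j : 'I_m) (l : 'I_t) := j * t + l.
have pos_lt j l : pos j l < size (enum X).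
  rewrite -cardE; apply: leq_trans le_mt; rewrite /pos.
  have := ltn_ord j; have := ltn_ord l; nia.
pose B j := [set nth x0 (enum X) (pos j l) | l : 'I_t].
have nthE j l j' l' : nth x0 (enum X) (pos j l) = nth x0 (enum X) (pos j' l') ->
    pos j l = pos j' l'.
  by move/eqP; rewrite nth_uniq ?pos_lt ?enum_uniq // => /eqP.
exists B; split.
- move=> j; apply/subsetP => _ /imsetP [l _ ->].
  by rewrite -mem_enum mem_nth ?pos_lt.
- move=> j; rewrite card_imset ?card_ord // => l l' /nthE /eqP.
  by rewrite eqn_add2l => /eqP /val_inj.
- move=> j j' _ /imsetP [l _ ->] /imsetP [l' _] /nthE /(congr1 (divn^~ t)).
  have t_gt0 : 0 < t by apply: leq_ltn_trans (ltn_ord l).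
  by rewrite !divnMDl // !divn_small ?ltn_ord // !addn0 => /val_inj.
Qed.

End Blocks.

Section Maps.
Variables (h n : nat).
Implicit Types (S : 'I_h -> {set 'I_n}) (A : {set {ffun 'I_h -> 'I_n}}).

Definition box S : {set {ffun 'I_h -> 'I_n}} :=
  [set f : {ffun 'I_h -> 'I_n} | [forall w, f w \in S w]].

Lemma card_box S : #|box S| = \prod_w #|S w|.
Proof.
have -> : #|box S| = #|family S|.
  by apply: eq_card => f; rewrite inE; apply/forallP/familyP.
by rewrite card_family foldrE big_map big_enum.
Qed.

Lemma card_box_restricted S (Q : {set 'I_h}) :
  (forall w, w \notin Q -> S w = [set: 'I_n]) ->
  #|box S| * n ^ #|Q| = (\prod_(w in Q) #|S w|) * n ^ h.
Proof.
move=> S_full; rewrite card_box (bigID (mem Q)) /= -mulnA; congr (_ * _).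
rewrite (eq_bigr (fun _ => n)) => [|w /S_full ->]; last by rewrite cardsT card_ord.
rewrite prod_nat_const -expnD addnC; congr (_ ^ _).
by rewrite -[RHS](card_ord h) -(cardC (mem Q)); congr (_ + _); apply: eq_card.
Qed.

Lemma card_box_pair S a b : a != b ->
  (forall w, w != a -> w != b -> S w = [set: 'I_n]) ->
  #|box S| * n ^ 2 = #|S a| * #|S b| * n ^ h.
Proof.
move=> ab S_full; have := @card_box_restricted S [set a; b].
rewrite cards2 ab big_setU1 ?inE //= big_set1 mulnA; apply => w.
by rewrite !inE negb_or => /andP [] /S_full; apply.
Qed.

Lemma card_box_one S a : (forall w, w != a -> S w = [set: 'I_n]) ->
  #|box S| * n = #|S a| * n ^ h.
Proof.
move=> S_full; have := @card_box_restricted S [set a].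
by rewrite cards1 big_set1; apply => w; rewrite inE => /S_full.
Qed.

Variable H : graph h.

Definition copies_of A := [set copy H f | f in A].

Definition embeddings (G : graph n) := [set f | embedding H G f].

Lemma NH_copies G : NH H G = #|copies_of (embeddings G)|.
Proof.
rewrite /NH /copies_of; apply: eq_card => K.
by apply/imsetP/imsetP => -[f f_emb ->]; exists f; rewrite ?inE in f_emb *.
Qed.

(* Each copy of H comes from at most h^h maps (those with the same image). *)
Lemma card_le_copies A : #|A| <= h ^ h * #|copies_of A|.
Proof.
rewrite -sum1_card (partition_big_imset (copy H)) /= mulnC -sum_nat_const.
apply: leq_sum => _ /imsetP [f0 _ ->]; rewrite sum1_card.
apply: (@leq_trans #|ffun_on (f0 @: [set: 'I_h])|).
  apply: subset_leq_card; apply/subsetP => f; rewrite !inE => /andP [_ /eqP [im_f _]].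
  by apply/ffun_onP => x; rewrite -im_f imset_f.
have exp_mono a b e : a <= b -> a ^ e <= b ^ e.
  by move=> le_ab; elim: e => // e IH; rewrite !expnS leq_mul.
rewrite card_ffun_on card_ord exp_mono // (leq_trans (leq_imset_card _ _)) //.
by rewrite cardsT card_ord.
Qed.

End Maps.

Section Multipartite.
Variables (n r : nat).
Implicit Type d : 'I_n -> 'I_r.

Definition cmp_graph d : graph n := [set p | d p.1 != d p.2].

Definition part d i : {set 'I_n} := [set x | d x == i].

Lemma cmp_graph_simple d : simple_graph (cmp_graph d).
Proof.
apply/andP; split; apply/forallP => x; first by rewrite inE eqxx.
by apply/forallP => y; apply/implyP; rewrite !inE eq_sym.
Qed.

(* A clique meets every part at most once, so cmp_graph d is K_{r+1}-free. *)
Lemma cmp_graph_clique_free d : clique_free r.+1 (cmp_graph d).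
Proof.
apply/negP => /existsP [K /andP [/eqP card_K /forallP K_clique]].
have d_inj : {in K &, injective d}.
  move=> x y xK yK dxy; apply/eqP; apply: contraTT isT => xy.
  by have := K_clique x; rewrite xK => /forallP /(_ y); rewrite yK xy inE dxy eqxx.
by have := max_card (d @: K); rewrite card_in_imset // card_K card_ord ltnn.
Qed.

Lemma cmp_graph_le_ex h (H : graph h) d : NH H (cmp_graph d) <= exHK H n r.
Proof.
by apply: (leq_bigmax_cond (cmp_graph d)); rewrite cmp_graph_simple cmp_graph_clique_free.
Qed.

Lemma box_embeds h (H : graph h) d (col : 'I_h -> 'I_r) S :
  separated S -> (forall w, S w \subset part d (col w)) ->
  (forall a b, (a, b) \in H -> col a != col b) -> box S \subset embeddings H (cmp_graph d).
Proof.
move=> S_sep S_part col_proper; apply/subsetP => f; rewrite !inE => /forallP f_box.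
have f_col w : d (f w) = col w by have := subsetP (S_part w) _ (f_box w); rewrite inE => /eqP.
apply/andP; split.
  by apply/injectiveP => w w' fww'; apply: (S_sep _ _ (f w)); rewrite // fww'.
by apply/forallP => -[a b]; apply/implyP => ab; rewrite inE /= !f_col col_proper.
Qed.

Lemma box_in_parts h d (col : 'I_h -> 'I_r) m (slot : 'I_h -> 'I_m) t :
  0 < n -> injective slot -> (forall w, m * t <= #|part d (col w)|) ->
  exists S : 'I_h -> {set 'I_n},
    [/\ forall w, S w \subset part d (col w), forall w, #|S w| = t & separated S].
Proof.
move=> n_gt0 slot_inj room.
have [B B_blocks] : exists B : 'I_r -> 'I_m -> {set 'I_n}, forall c,
    m * t <= #|part d c| ->
    [/\ forall j, B c j \subset part d c, forall j, #|B c j| = t & separated (B c)].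
  apply: (fin_all_exists (U := fun _ => 'I_m -> {set 'I_n})
    (P := fun c Bc => m * t <= #|part d c| ->
       [/\ forall j, Bc j \subset part d c, forall j, #|Bc j| = t & separated Bc])) => c.
  case: (leqP (m * t) #|part d c|) => [room_c|_].
    by have [Bc Bc_blocks] := blocks (Ordinal n_gt0) room_c; exists Bc.
  by exists (fun _ => set0).
exists (fun w => B (col w) (slot w)); split => [w|w|w w' x xw xw'].
- by have [] := B_blocks _ (room w).
- by have [] := B_blocks _ (room w).
have col_ww' : col w = col w'.
  have [sub_w _ _] := B_blocks _ (room w); have [sub_w' _ _] := B_blocks _ (room w').
  move: (subsetP (sub_w _) x xw) (subsetP (sub_w' _) x xw').
  by rewrite !inE => /eqP <- /eqP.
rewrite -col_ww' in xw'; have [_ _ sep] := B_blocks _ (room w).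
exact: slot_inj (sep _ _ x xw xw').
Qed.

End Multipartite.

Definition mod_colouring n r (r_gt0 : 0 < r) (x : 'I_n) : 'I_r := Ordinal (ltn_pmod x r_gt0).

Lemma mod_part_large n r (r_gt0 : 0 < r) (c : 'I_r) :
  n %/ r <= #|part (@mod_colouring n r r_gt0) c|.
Proof.
have pos_lt (j : 'I_(n %/ r)) : j * r + c < n.
  apply: leq_trans (leq_divM n r); have := ltn_ord j; have := ltn_ord c; nia.
pose g j := Ordinal (pos_lt j).
have g_inj : injective g.
  move=> j j' /(congr1 (fun x : 'I_n => x %/ r)) /=.
  by rewrite !divnMDl // (divn_small (ltn_ord c)) !addn0 => /val_inj.
rewrite -[X in X <= _](card_ord (n %/ r)) -(card_imset _ g_inj).
apply: subset_leq_card; apply/subsetP => _ /imsetP [j _ ->].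
by rewrite inE; apply/eqP/val_inj; rewrite /= modnMDl modn_small.
Qed.

Section Extremal.
Variables (k r h : nat) (H : graph h) (cH : 'I_h -> 'I_k).
Hypotheses (k_gt1 : 1 < k) (k_le_r : k <= r) (H_col : cmp_colouring cH H).

Lemma r_gt0 : 0 < r.
Proof. exact: leq_trans (ltnW k_gt1) k_le_r. Qed.

Lemma H_proper a b : (a, b) \in H -> cH a != cH b.
Proof. by rewrite H_col.2. Qed.

Lemma H_edge : exists u v, (u, v) \in H.
Proof.
have [u cu] := H_col.1 (Ordinal (ltnW k_gt1)); have [v cv] := H_col.1 (Ordinal k_gt1).
by exists u, v; rewrite H_col.2 cu cv.
Qed.

Lemma h_gt0 : 0 < h.
Proof. by have [u _] := H_edge; apply: leq_ltn_trans (ltn_ord u). Qed.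

(* Lower bound on the extremal number, from the balanced r-partite graph:
   a box of h disjoint blocks of size n / (r h) in the parts cH w. *)
Lemma ex_lower_bound n : r * h <= n -> n ^ h <= (2 * r * h ^ 2) ^ h * exHK H n r.
Proof.
move=> rh_le_n; set t := n %/ (r * h).
have rh_gt0 : 0 < r * h by rewrite muln_gt0 r_gt0 h_gt0.
have n_gt0 : 0 < n := leq_trans rh_gt0 rh_le_n.
pose col w := widen_ord k_le_r (cH w).
have room w : h * t <= #|part (@mod_colouring n r r_gt0) (col w)|.
  apply: leq_trans (mod_part_large _ _ _); rewrite /t divnMA mulnC; exact: leq_divM.
have [S [S_part S_card S_sep]] := box_in_parts n_gt0 (@inj_id _) room.
have S_emb : box S \subset embeddings H (cmp_graph (@mod_colouring n r r_gt0)).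
  apply: box_embeds S_sep S_part _ => a b ab.
  by rewrite -(inj_eq val_inj) /= (inj_eq val_inj) H_proper.
have box_t : #|box S| = t ^ h.
  by rewrite card_box (eq_bigr _ (fun w _ => S_card w)) prod_nat_const card_ord.
have t_lower : t ^ h <= h ^ h * exHK H n r.
  rewrite -box_t; apply: leq_trans (card_le_copies H _) _; rewrite leq_mul2l; apply/orP; right.
  apply: leq_trans (cmp_graph_le_ex H (@mod_colouring n r r_gt0)); rewrite NH_copies.
  exact/subset_leq_card/imsetS.
have n_le : n <= 2 * (r * h) * t by apply: le_double_div.
apply: (@leq_trans ((2 * (r * h) * t) ^ h)); first by rewrite leq_exp2r ?h_gt0.
have -> : 2 * r * h ^ 2 = 2 * (r * h) * h by rewrite -!mulnA.
rewrite !expnMn; have := leq_mul (leqnn (2 ^ h * (r ^ h * h ^ h))) t_lower.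
by rewrite !mulnA.
Qed.

Definition large n D (d : 'I_n -> 'I_r) := [set c | n <= D * #|part d c|].

(* An embedding sends the k colour classes of H to k distinct parts, so it
   meets a part outside any set of fewer than k colours. *)
Lemma embedding_meets_small n (d : 'I_n -> 'I_r) (B : {set 'I_r}) f :
  #|B| < k -> f \in embeddings H (cmp_graph d) -> exists w, d (f w) \notin B.
Proof.
move=> B_small; rewrite inE => /andP [_ /forallP f_edges].
apply/existsP; apply: contraTT B_small; rewrite negb_exists -leqNgt => /forallP f_in_B.
have [rep repK] : exists rep : 'I_k -> 'I_h, forall p, cH (rep p) = p.
  exact: (fin_all_exists (U := fun _ => 'I_h) (P := fun p x => cH x = p) H_col.1).
pose g p := d (f (rep p)).
have g_inj : injective g.
  move=> p q gpq; apply: contraTeq isT => pq.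
  have /implyP := f_edges (rep p, rep q); rewrite /= H_col.2 !repK pq inE /= => /(_ isT).
  by rewrite -/(g p) -/(g q) gpq eqxx.
rewrite -(card_ord k) -(card_imset _ g_inj); apply: subset_leq_card.
by apply/subsetP => _ /imsetP [p _ ->]; rewrite (negPn (f_in_B _)).
Qed.

(* Case of fewer than k large parts: every copy of H uses one of the fewer
   than r n / D vertices lying in small parts. *)
Lemma few_large_parts n D (d : 'I_n -> 'I_r) : 0 < n -> #|large D d| < k ->
  D * NH H (cmp_graph d) <= h * r * n ^ h.
Proof.
move=> n_gt0 few; set small := [set x | d x \notin large D d].
have small_card : D * #|small| <= r * n.
  have : small \subset \bigcup_(c | c \notin large D d) part d c.
    by apply/subsetP => x; rewrite inE => xs; apply/bigcupP; exists (d x); rewrite // inE.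
  move/subset_leq_card/leq_trans/(_ (card_bigcup_le _ _)) => le_sum.
  apply: leq_trans (leq_mul (leqnn D) le_sum) _; rewrite big_distrr /=.
  apply: (@leq_trans (\sum_(c | c \notin large D d) n)).
    by apply: leq_sum => c; rewrite inE -ltnNge => /ltnW.
  by rewrite sum_nat_const leq_mul2r (leq_trans (max_card _)) ?card_ord ?orbT.
pose hit (w : 'I_h) := box (fun w' => if w' == w then small else [set: 'I_n]).
have emb_hits : embeddings H (cmp_graph d) \subset \bigcup_w hit w.
  apply/subsetP => f /(embedding_meets_small few) [w fw]; apply/bigcupP; exists w => //.
  by rewrite inE; apply/forallP => w'; case: eqP => [->|_]; rewrite inE.
have hit_card w : #|hit w| * n = #|small| * n ^ h.
  by rewrite (card_box_one (a := w)) ?eqxx // => w' /negbTE ->.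
have NH_count : NH H (cmp_graph d) * n <= h * #|small| * n ^ h.
  rewrite NH_copies; apply: leq_trans (leq_mul (leq_imset_card _ _) (leqnn n)) _.
  apply: leq_trans (leq_mul (subset_leq_card emb_hits) (leqnn n)) _.
  apply: leq_trans (leq_mul (card_bigcup_le _ _) (leqnn n)) _.
  by rewrite big_distrl /= (eq_bigr _ (fun w _ => hit_card w)) sum_nat_const card_ord mulnA.
rewrite -(leq_pmul2r n_gt0); have := leq_mul (leqnn D) NH_count.
have := leq_mul (leqnn (h * n ^ h)) small_card; rewrite !mulnA; nia.
Qed.

(* H is symmetric, so a non-edge of the recoloured graph can be oriented. *)
Lemma H_sym a b : ((a, b) \in H) = ((b, a) \in H).
Proof. by rewrite !H_col.2 eq_sym. Qed.

Definition recolour n (d : 'I_n -> 'I_r) (M : {set 'I_n}) i x := if x \in M then i else d x.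

Definition crossing n (A B : {set 'I_n}) : {set {ffun 'I_h -> 'I_n}} :=
  \bigcup_(p in H) box (fun w => if w == p.1 then A else if w == p.2 then B else [set: 'I_n]).

Lemma crossing_in n (A B : {set 'I_n}) (f : {ffun 'I_h -> 'I_n}) a b :
  (a, b) \in H -> f a \in A -> f b \in B -> f \in crossing A B.
Proof.
move=> ab fa fb; apply/bigcupP; exists (a, b) => //; rewrite inE; apply/forallP => w /=.
by case: eqP => [->|_]; [|case: eqP => [->|_]]; rewrite ?inE.
Qed.

Lemma crossing_card n (A B : {set 'I_n}) :
  #|crossing A B| * n ^ 2 <= h ^ 2 * (#|A| * #|B| * n ^ h).
Proof.
apply: leq_trans (leq_mul (card_bigcup_le _ _) (leqnn _)) _; rewrite big_distrl /=.
rewrite (eq_bigr (fun _ => #|A| * #|B| * n ^ h)) => [|[a b] ab].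
  rewrite sum_nat_const leq_mul2r (leq_trans (max_card _)) ?orbT //.
  by rewrite card_prod card_ord.
have a_neq_b : a != b by apply: contraNneq (H_proper ab) => ->.
rewrite (card_box_pair (a := a) (b := b)) //= ?eqxx 1?eq_sym ?(negbTE a_neq_b) //.
by move=> w /negbTE -> /negbTE ->.
Qed.

Lemma lost_embeddings n (d : 'I_n -> 'I_r) (M : {set 'I_n}) j i :
  M \subset part d j ->
  embeddings H (cmp_graph d) \subset
    embeddings H (cmp_graph (recolour d M i)) :|: crossing M (part d i).
Proof.
move=> M_part; apply/subsetP => f; rewrite !inE => /andP [f_inj /forallP f_edges].
rewrite /embedding f_inj /=; case: forallP => [//|lost]; apply/orP; right.
have [[a b]] : exists p, ~~ ((p \in H) ==> ((f p.1, f p.2) \in cmp_graph (recolour d M i))).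
  by apply/existsP; rewrite -negb_forall; apply/forallP.
rewrite negb_imply inE negbK /recolour /= => /andP [ab same].
have := f_edges (a, b); rewrite ab inE /= => diff.
have M_col x : x \in M -> d x = j by move/(subsetP M_part); rewrite inE => /eqP.
move: same; case: ifP => fa; case: ifP => fb /eqP same.
- by rewrite (M_col _ fa) (M_col _ fb) eqxx in diff.
- by apply: crossing_in ab fa _; rewrite inE same.
- by apply: (@crossing_in _ _ _ _ b a); rewrite 1?H_sym // inE same.
- by rewrite same eqxx in diff.
Qed.

(* A box containing an edge of H inside part j yields no copy of cmp_graph d. *)
Lemma new_copies_disjoint n (d : 'I_n -> 'I_r) (S : 'I_h -> {set 'I_n}) u v j :
  (u, v) \in H -> S u \subset part d j -> S v \subset part d j ->
  copies_of H (box S) :&: copies_of H (embeddings H (cmp_graph d)) = set0.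
Proof.
move=> uv Su Sv; apply/setP => K; rewrite !inE; apply/negP.
case/andP => /imsetP [f f_box ->] /imsetP [g g_emb f_g].
have : (f u, f v) \in (copy H g).2 by rewrite -f_g; apply: (imset_f (fun p => (f p.1, f p.2)) uv).
case/imsetP => p pH [gp1 gp2]; move: g_emb; rewrite inE => /andP [_ /forallP /(_ p)].
rewrite pH inE /= -gp1 -gp2; move: f_box; rewrite inE => /forallP f_box.
move: (subsetP Su _ (f_box u)) (subsetP Sv _ (f_box v)); rewrite !inE.
by move=> /eqP -> /eqP ->; rewrite eqxx.
Qed.

(* Counting copies before and after the move: old copies survive or cross,
   and the copies of the box are new, so NH + |box| / h^h <= ex + |crossing|. *)
Lemma exchange_bound n (d : 'I_n -> 'I_r) (S : 'I_h -> {set 'I_n}) u v j i :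
  (u, v) \in H -> S u \subset part d j -> S v \subset part d j ->
  box S \subset embeddings H (cmp_graph (recolour d (S u) i)) ->
  h ^ h * NH H (cmp_graph d) + #|box S| <=
  h ^ h * (exHK H n r + #|crossing (S u) (part d i)|).
Proof.
move=> uv Su Sv S_emb.
set old := copies_of H (embeddings H (cmp_graph d)); set fresh := copies_of H (box S).
set new := copies_of H (embeddings H (cmp_graph (recolour d (S u) i))).
set lost := copies_of H (crossing (S u) (part d i)).
have old_sub : old \subset new :|: lost by rewrite -imsetU imsetS // (lost_embeddings _ Su).
have fresh_sub : fresh \subset new by rewrite imsetS.
have count : #|old| + #|fresh| <= #|new| + #|lost|.
  rewrite -cardsUI setIC (new_copies_disjoint uv Su Sv) cards0 addn0.
  apply: leq_trans (leq_card_setU new lost); apply: subset_leq_card.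
  by rewrite subUset old_sub (subset_trans fresh_sub) ?subsetUl.
have new_le : #|new| <= exHK H n r by rewrite -NH_copies cmp_graph_le_ex.
have lost_le : #|lost| <= #|crossing (S u) (part d i)| by apply: leq_imset_card.
rewrite NH_copies -/old; apply: leq_trans (leq_add (leqnn _) (card_le_copies H (box S))) _.
by rewrite -mulnDr leq_mul2l (leq_trans count) ?orbT ?leq_add.
Qed.

(* Case of at least k large parts and a small part i: moving a block of size
   t = n / (D (h + 1)) from the large part hosting a vertex v of H into part i
   gains t^h / h^h copies at the cost of L crossing maps. *)
Lemma move_block n D (d : 'I_n -> 'I_r) i t :
  t = n %/ (D * h.+1) -> 0 < t -> k <= #|large D d| -> i \notin large D d ->
  exists L, h ^ h * NH H (cmp_graph d) + t ^ h <= h ^ h * (exHK H n r + L) /\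
            L * n ^ 2 <= h ^ 2 * (t * #|part d i| * n ^ h).
Proof.
move=> tE t_gt0 many i_small.
have n_gt0 : 0 < n by apply: leq_trans t_gt0 _; rewrite tE leq_div.
pose be (p : 'I_k) : 'I_r := enum_val (widen_ord many p).
have be_large p : be p \in large D d by apply: enum_valP.
have be_inj : injective be.
  by move=> p q /enum_val_inj /(congr1 val) /= pq; apply: val_inj.
have [u [v uv]] := H_edge.
have v_neq_u : v != u by apply: contraTneq uv => ->; rewrite H_col.2 eqxx.
(* Vertex w of H is placed in block slot w of the large part col w; the moved
   block S u shares the part of S v but not its block. *)
pose col w := be (cH (if w == u then v else w)).
pose slot w : 'I_h.+1 := if w == u then ord_max else widen_ord (leqnSn h) w.
have slot_inj : injective slot.
  move=> w w'; rewrite /slot; case: ifP => [/eqP ->|wu]; case: ifP => [/eqP ->|w'u] //.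
  - by move/(congr1 val) => /= hw'; have := ltn_ord w'; rewrite -hw' ltnn.
  - by move/(congr1 val) => /= hw; have := ltn_ord w; rewrite hw ltnn.
  - by move/(congr1 val) => /= /val_inj.
have room w : h.+1 * t <= #|part d (col w)|.
  have := be_large (cH (if w == u then v else w)); rewrite inE => /leq_div_of_mul.
  by apply: leq_trans; rewrite tE divnMA mulnC leq_divM.
have [S [S_part S_card S_sep]] := box_in_parts n_gt0 slot_inj room.
have S_moved : box S \subset embeddings H (cmp_graph (recolour d (S u) i)).
  pose col' w := if w == u then i else be (cH w).
  apply: (box_embeds (col := col') S_sep) => [w|a b ab].
    apply/subsetP => x xw; rewrite inE /recolour /col'.
    case: (w =P u) => [wu|/eqP wu]; first by rewrite -wu xw.
    have -> : (x \in S u) = false.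
      by apply/negP => /(S_sep _ _ _ xw) wu'; rewrite wu' eqxx in wu.
    by have := subsetP (S_part w) x xw; rewrite inE /col (negbTE wu).
  rewrite /col'; case: (a =P u) => [au|_]; case: (b =P u) => [bu|_].
  - by move: ab; rewrite au bu H_col.2 eqxx.
  - by apply: contraNneq i_small => ->.
  - by apply: contraNneq i_small => <-.
  - by rewrite (inj_eq be_inj) H_proper.
have S_same_part : S v \subset part d (col u).
  by rewrite /col eqxx; have := S_part v; rewrite /col (negbTE v_neq_u).
exists #|crossing (S u) (part d i)|; split.
  have := exchange_bound uv (S_part u) S_same_part S_moved.
  by rewrite card_box (eq_bigr _ (fun w _ => S_card w)) prod_nat_const card_ord.
by rewrite -(S_card u); apply: crossing_card.
Qed.

(* The explicit constants: n^h <= ex_factor ex, large parts have >= n /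
   large_factor vertices, moved blocks have >= n / block_factor vertices, a
   part below n / small_factor is tiny, and the deficit is n^h / deficit_factor. *)
Definition ex_factor := (2 * r * h ^ 2) ^ h.
Definition large_factor := 2 * h * r * ex_factor.
Definition block_factor := 2 * large_factor * h.+1.
Definition small_factor := 2 * h ^ h * h ^ 2 * block_factor ^ h * large_factor.
Definition deficit_factor := 2 * ex_factor * (2 * h ^ h * block_factor ^ h).

Lemma ex_factor_gt0 : 0 < ex_factor.
Proof. by rewrite /ex_factor ssrnat.expn_gt0 !muln_gt0 r_gt0 h_gt0. Qed.

Lemma large_factor_gt0 : 0 < large_factor.
Proof. by rewrite /large_factor !muln_gt0 h_gt0 r_gt0 ex_factor_gt0. Qed.

Lemma chunk_factor_gt0 : 0 < block_factor.
Proof. by rewrite /block_factor !muln_gt0 h_gt0 r_gt0 ex_factor_gt0. Qed.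

Lemma large_le_small : large_factor <= small_factor.
Proof. by apply: leq_pmull; rewrite !muln_gt0 !ssrnat.expn_gt0 h_gt0 chunk_factor_gt0. Qed.

Lemma small_factor_gt0 : 0 < small_factor.
Proof. exact: leq_trans large_factor_gt0 large_le_small. Qed.

Lemma deficit_factor_gt0 : 0 < deficit_factor.
Proof. by rewrite !muln_gt0 ex_factor_gt0 !ssrnat.expn_gt0 h_gt0 chunk_factor_gt0. Qed.

Lemma deficit_few_large n (d : 'I_n -> 'I_r) : r * h <= n -> #|large large_factor d| < k ->
  2 * ex_factor * NH H (cmp_graph d) + n ^ h <= 2 * ex_factor * exHK H n r.
Proof.
move=> rh_le_n few.
have n_gt0 : 0 < n by apply: leq_trans rh_le_n; rewrite muln_gt0 r_gt0 h_gt0.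
have NH_small : 2 * ex_factor * NH H (cmp_graph d) <= n ^ h.
  have hr_gt0 : 0 < h * r by rewrite muln_gt0 h_gt0 r_gt0.
  rewrite -(leq_pmul2l hr_gt0); apply: leq_trans (few_large_parts n_gt0 few).
  by rewrite /large_factor; lia.
have := ex_lower_bound rh_le_n; rewrite -/ex_factor; nia.
Qed.

(* The deficit when k parts are large: the loss is at most half the gain
   because the tiny part has fewer than n / small_factor vertices. *)
Lemma deficit_exchange n (d : 'I_n -> 'I_r) i :
  large_factor * h.+1 <= n -> small_factor * #|part d i| < n ->
  k <= #|large large_factor d| ->
  2 * h ^ h * block_factor ^ h * NH H (cmp_graph d) + n ^ h <=
  2 * h ^ h * block_factor ^ h * exHK H n r.
Proof.
move=> N0_le_n i_tiny many; set t := n %/ (large_factor * h.+1).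
have Dh_gt0 : 0 < large_factor * h.+1 by rewrite muln_gt0 large_factor_gt0.
have n_gt0 : 0 < n := leq_trans Dh_gt0 N0_le_n.
have t_gt0 : 0 < t by rewrite divn_gt0.
have i_small : i \notin large large_factor d.
  rewrite inE -ltnNge; apply: leq_ltn_trans i_tiny.
  by rewrite leq_mul2r large_le_small orbT.
have [L [gain loss]] := move_block (erefl t) t_gt0 many i_small.
have n_le : n <= block_factor * t by rewrite /block_factor -(mulnA 2); apply: le_double_div.
have t_le_n : t <= n := leq_div _ _.
have nh_le : n ^ h <= block_factor ^ h * t ^ h by rewrite -expnMn leq_exp2r ?h_gt0.
set c := #|part d i| in i_tiny loss; set E := block_factor ^ h in nh_le *.
set X := n ^ h in loss nh_le *; set T := t ^ h in gain nh_le *.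
have loss_n : L * n <= h ^ 2 * c * E * T.
  rewrite -(leq_pmul2r n_gt0); apply: leq_trans (_ : _ <= h ^ 2 * c * E * T * t) _.
    by have := leq_mul (leqnn (h ^ 2 * t * c)) nh_le; nia.
  by rewrite leq_mul2l t_le_n orbT.
have loss_half : 2 * h ^ h * L <= T.
  rewrite -(leq_pmul2r n_gt0); apply: leq_trans (_ : _ <= small_factor * c * T) _.
    have := leq_mul (leqnn (2 * h ^ h)) loss_n.
    have := leq_mul (leqnn (2 * h ^ h * h ^ 2 * c * E * T)) large_factor_gt0.
    rewrite /small_factor -/E; lia.
  by rewrite [leqLHS]mulnC leq_mul2l (ltnW i_tiny) orbT.
nia.
Qed.

Theorem stability_deficit n (d : 'I_n -> 'I_r) i :
  large_factor * h.+1 <= n -> small_factor * #|part d i| < n ->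
  deficit_factor * NH H (cmp_graph d) + n ^ h <= deficit_factor * exHK H n r.
Proof.
move=> N0_le_n i_tiny; have NH_le := cmp_graph_le_ex H d.
have C_gt0 : 0 < 2 * h ^ h * block_factor ^ h.
  by rewrite !muln_gt0 !ssrnat.expn_gt0 h_gt0 chunk_factor_gt0.
case: (ltnP #|large large_factor d| k) => [few|many].
- have rh_le_n : r * h <= n.
    apply: leq_trans N0_le_n; have := ex_factor_gt0; rewrite /large_factor; nia.
  exact: deficit_scale (deficit_few_large rh_le_n few) NH_le C_gt0.
- have -> : deficit_factor = 2 * h ^ h * block_factor ^ h * (2 * ex_factor).
    by rewrite /deficit_factor mulnC.
  apply: deficit_scale (deficit_exchange N0_le_n i_tiny many) NH_le _.
  by rewrite muln_gt0 ex_factor_gt0.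
Qed.

End Extremal.

Section CompleteMultipartite.
Variables (n s : nat) (P : graph n) (c : 'I_n -> 'I_s).
Hypothesis P_col : cmp_colouring c P.

Lemma parts_le_clique_number r : clique_free r.+1 P -> s <= r.
Proof.
move=> P_free; rewrite leqNgt; apply: contraNN P_free => lt_rs.
have [rep repK] : exists rep : 'I_s -> 'I_n, forall j, c (rep j) = j.
  exact: (fin_all_exists (U := fun _ => 'I_n) (P := fun j x => c x = j) P_col.1).
have rep_inj : injective rep by move=> j j' /(congr1 c); rewrite !repK.
apply/existsP; exists [set rep (widen_ord lt_rs j) | j : 'I_r.+1]; apply/andP; split.
  by rewrite card_imset ?card_ord // => j j' /rep_inj /(congr1 val) /= /val_inj.
apply/forallP => x; apply/implyP => /imsetP [a _ ->].
apply/forallP => y; apply/implyP => /imsetP [b _ ->].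
by apply/implyP; rewrite P_col.2 !repK; apply: contra => /eqP ->.
Qed.

Variables (r : nat) (s_le_r : s <= r).

(* For s <= r the graph is cmp_graph of its colouring read in 'I_r, with the
   same nonempty parts and r - s empty ones. *)
Definition widened_colouring (x : 'I_n) : 'I_r := widen_ord s_le_r (c x).

Lemma cmp_mgraph : P = cmp_graph widened_colouring.
Proof.
by apply/setP => -[x y]; rewrite inE P_col.2 /widened_colouring -(inj_eq val_inj).
Qed.

Lemma part_widened (i : 'I_s) : part widened_colouring (widen_ord s_le_r i) = [set x | c x == i].
Proof. by apply/setP => x; rewrite !inE -(inj_eq val_inj) /= (inj_eq val_inj). Qed.

Lemma part_unused (j : 'I_r) : s <= j -> part widened_colouring j = set0.
Proof.
move=> le_sj; apply/setP => x; rewrite !inE; apply: contraTF le_sj => /eqP <-.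
by rewrite -ltnNge /widened_colouring /= ltn_ord.
Qed.

End CompleteMultipartite.

Local Open Scope ring_scope.

Lemma deficit_contradiction (R : realType) (C NH ex n h : nat) :
  (0 < C)%N -> (0 < n)%N -> (C * NH + n ^ h <= C * ex)%N ->
  ~ ((ex%:R : R) - (2 * C)%:R^-1 * n%:R ^+ h <= NH%:R).
Proof.
move=> C_gt0 n_gt0 deficit near_extremal.
have X_gt0 : 0 < (n%:R : R) ^+ h by rewrite exprn_gt0 // ltr0n.
have C_pos : 0 < (C%:R : R) by rewrite ltr0n.
have deficit_R : (C%:R : R) * NH%:R + n%:R ^+ h <= C%:R * ex%:R.
  by rewrite -!natrM -natrX -natrD ler_nat.
have half : (C%:R : R) * ((2 * C)%:R^-1 * n%:R ^+ h) = n%:R ^+ h / 2.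
  by rewrite natrM; field; rewrite gt_eqF.
have := ler_wpM2l (ltW C_pos) near_extremal; rewrite mulrBr half => near_R.
lra.
Qed.

Lemma small_part_of_gamma (R : realType) (G0 m n : nat) (gamma : R) :
  (0 < G0)%N -> gamma < G0%:R^-1 -> m%:R < gamma * n%:R -> (G0 * m < n)%N.
Proof.
move=> G0_gt0 gamma_lt m_lt; have G0_pos : 0 < (G0%:R : R) by rewrite ltr0n.
have : (m%:R : R) < G0%:R^-1 * n%:R.
  by apply: lt_le_trans m_lt _; apply: ler_wpM2r (ltW gamma_lt).
by rewrite -(ltr_pM2l G0_pos) mulrA mulrV ?unitfE ?gt_eqF // mul1r -natrM ltr_nat.
Qed.

Theorem lemma2p1 (R : realType) (k r h : nat) (H : graph h) :
  (2 <= k)%N -> (k <= r)%N ->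
  simple_graph H -> complete_multipartite k H ->
  exists gamma0 : R, 0 < gamma0 /\
    forall gamma : R, 0 < gamma -> gamma < gamma0 ->
      exists (zeta : R) (n0 : nat), 0 < zeta /\
        forall (n s : nat) (P : graph n) (c : 'I_n -> 'I_s),
          (n0 <= n)%N ->
          cmp_colouring c P ->
          clique_free r.+1 P ->
          (NH H P)%:R >= (exHK H n r)%:R - zeta * (n%:R) ^+ h ->
          s = r /\ forall i : 'I_s, #|[set x | c x == i]|%:R >= gamma * n%:R.
Proof.
move=> k_gt1 k_le_r _ [cH H_col].
have G0_gt0 := small_factor_gt0 k_gt1 k_le_r H_col.
have C_gt0 := deficit_factor_gt0 k_gt1 k_le_r H_col.
exists (small_factor r h)%:R^-1; split; first by rewrite invr_gt0 ltr0n.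
move=> gamma _ gamma_lt; exists (2 * deficit_factor r h)%:R^-1, (large_factor r h * h.+1)%N.
split; first by rewrite invr_gt0 ltr0n muln_gt0.
move=> n s P c N0_le_n P_col P_free near_extremal.
have n_gt0 : (0 < n)%N.
  by apply: leq_trans N0_le_n; rewrite muln_gt0 (large_factor_gt0 k_gt1 k_le_r H_col).
have s_le_r := parts_le_clique_number P_col P_free.
have no_tiny_part j : ~ (small_factor r h * #|part (widened_colouring c s_le_r) j| < n)%N.
  move=> tiny; have := stability_deficit k_gt1 k_le_r H_col N0_le_n tiny.
  by rewrite -(cmp_mgraph P_col) => /(@deficit_contradiction R _ _ _ _ _ C_gt0 n_gt0).
split.
  apply/eqP; rewrite eqn_leq s_le_r leqNgt; apply/negP => lt_sr.
  by apply: (no_tiny_part (Ordinal lt_sr)); rewrite part_unused // cards0 muln0.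
move=> i; rewrite leNgt; apply/negP => small_i; apply: (no_tiny_part (widen_ord s_le_r i)).
by rewrite part_widened; apply: small_part_of_gamma small_i.
Qed.
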